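(* Let $U$ be a finite ground set, $\mathcal{M}=\langle U,\mathcal{F}\rangle$ a matroid on $U$ of rank at least $2$, $\lambda\ge 0$, $d$ an $\alpha$-relaxed semi-metric distance on $U$ (for some $\alpha\ge 1$), and $f:2^U\to\mathbb{R}_{\ge 0}$ a non-negative monotone submodular set function. Let $\phi(S)=f(S)+\lambda\, d(S)$. Let $\{x,y\}$ be a pair of distinct elements with $\{x,y\}\in\mathcal{F}$ maximizing $f(\{x,y\})+\lambda d(x,y)$ among all such pairs. Consider the local search algorithm that starts from a basis $S$ of $\mathcal{M}$ containing both $x$ and $y$ and, while there exist $u\in U\setminus S$ and $v\in S$ with $S-v+u\in\mathcal{F}$ and $\phi(S-v+u)>\phi(S)$, replaces $S$ by $S-v+u$; it returns the final $S$. Then the returned set $S$ satisfies $$\phi(S)\;\ge\;\frac{1}{2\alpha^2}\,\phi(O),$$ where $O$ is an optimal solution, i.e. $\phi(O)=\max\{\phi(T): T\in\mathcal{F}\}$.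
   Context: An $\alpha$-relaxed semi-metric distance on $U$ (with $\alpha\ge 1$) is a function $d:U\times U\to\mathbb{R}_{\ge 0}$ with $d(u,v)=d(v,u)$, $d(u,u)=0$, satisfying $d(u,v)\le \alpha\,(d(v,w)+d(w,u))$ for all $u,v,w\in U$. For $S\subseteq U$, $d(S)=\sum_{\{u,v\}\subseteq S,\,u\ne v} d(u,v)$. $f$ is monotone if $f(S)\le f(T)$ for $S\subseteq T$, and submodular if $f(S\cup\{u\})-f(S)\ge f(T\cup\{u\})-f(T)$ for $S\subseteq T$, $u\notin T$. $\mathcal{F}$ is the family of independent sets of the matroid; a basis is a maximal independent set. $S-v+u$ denotes $(S\setminus\{v\})\cup\{u\}$. *)

From mathcomp Require Import all_boot all_order all_algebra.
Set Implicit Arguments. Unset Strict Implicit. Unset Printing Implicit Defensive.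
Import Order.TTheory GRing.Theory Num.Theory.
Local Open Scope ring_scope.

Section Defs.
Variable U : finType.

Definition is_matroid (F : pred {set U}) : Prop :=
  [/\ F set0,
      (forall A B : {set U}, F B -> A \subset B -> F A) &
      (forall A B : {set U}, F A -> F B -> (#|A| < #|B|)%N ->
         exists2 e, e \in B :\: A & F (e |: A))].

Definition mrank (F : pred {set U}) : nat := \max_(A : {set U} | F A) #|A|.

Definition is_basis (F : pred {set U}) (S : {set U}) : Prop :=
  F S /\ (forall T : {set U}, F T -> S \subset T -> S = T).

Variable R : realFieldType.

Definition relaxed_semimetric (alpha : R) (d : U -> U -> R) : Prop :=
  [/\ forall u v, 0 <= d u v,
      forall u v, d u v = d v u,
      forall u, d u u = 0 &
      forall u v w, d u v <= alpha * (d v w + d w u)].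

(* d(S) = sum over unordered pairs {u,v} of distinct elements of S
   (each unordered pair counted once, via the enumeration order of U). *)
Definition dsum (d : U -> U -> R) (S : {set U}) : R :=
  \sum_(u in S) \sum_(v in S | (enum_rank u < enum_rank v)%N) d u v.

Definition monotone (f : {set U} -> R) : Prop :=
  forall S T : {set U}, S \subset T -> f S <= f T.

Definition submodular (f : {set U} -> R) : Prop :=
  forall (S T : {set U}) (u : U), S \subset T -> u \notin T ->
    f (u |: S) - f S >= f (u |: T) - f T.

Definition phi (f : {set U} -> R) (lam : R) (d : U -> U -> R) (S : {set U}) : R :=
  f S + lam * dsum d S.

Definition swap_step (F : pred {set U}) (Phi : {set U} -> R) (S T : {set U}) : Prop :=
  exists u v, [/\ u \notin S, v \in S, T = u |: (S :\ v), F T & Phi T > Phi S].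

Inductive ls_run (F : pred {set U}) (Phi : {set U} -> R) : {set U} -> {set U} -> Prop :=
| ls_refl S : ls_run F Phi S S
| ls_step S T V : swap_step F Phi S T -> ls_run F Phi T V -> ls_run F Phi S V.

Definition local_opt (F : pred {set U}) (Phi : {set U} -> R) (S : {set U}) : Prop :=
  forall T, ~ swap_step F Phi S T.

End Defs.

(* Let S be the local optimum and B = O \ S.  Since S is a basis, repeated
   symmetric exchange yields an injection pi : B -> S \ O such that every swap
   S - pi(o) + o is independent, and local optimality says that none of these
   swaps increases phi.  Summing the |B| swap inequalities, submodularity and
   monotonicity of f bound f(O) by 2 f(S) plus distance terms.  The distances
   inside O are then charged to distances inside S through the relaxed triangle
   inequality, in its averaged form d(X, X) <= 2 alpha (|X| - 1) d(X, t), which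
   costs a factor alpha^2.  For |B| = 2 the averaged form is empty and a
   four-point triangle argument replaces it; if moreover S = pi(B), then O is an
   independent pair and the choice of the starting pair {x, y} gives
   phi(O) <= phi(S) directly. *)

From mathcomp Require Import all_boot all_order all_algebra.
From mathcomp Require Import ring lra.
Set Implicit Arguments. Unset Strict Implicit. Unset Printing Implicit Defensive.
Import Order.TTheory GRing.Theory Num.Theory.
Local Open Scope ring_scope.

Section CrossSum.
Variables (U : finType) (R : realFieldType) (d : U -> U -> R).
Hypothesis d_ge0 : forall u v, 0 <= d u v.
Hypothesis dC : forall u v, d u v = d v u.
Hypothesis d_id : forall u, d u u = 0.

Definition dcross (X Y : {set U}) : R := \sum_(u in X) \sum_(v in Y) d u v.

Lemma dcrossC (X Y : {set U}) : dcross X Y = dcross Y X.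
Proof. by rewrite /dcross exchange_big; apply: eq_bigr => u _; apply: eq_bigr. Qed.

Lemma dcross_ge0 (X Y : {set U}) : 0 <= dcross X Y.
Proof. by apply: sumr_ge0 => u _; apply: sumr_ge0. Qed.

Lemma dcross_splitl (X Y Z : {set U}) :
  X \subset Y -> dcross Y Z = dcross X Z + dcross (Y :\: X) Z.
Proof. by move=> sXY; rewrite /dcross (big_setID X) (setIidPr sXY). Qed.

Lemma dcross_splitr (X Y Z : {set U}) :
  X \subset Y -> dcross Z Y = dcross Z X + dcross Z (Y :\: X).
Proof. by move=> sXY; rewrite dcrossC (dcross_splitl _ sXY) !(dcrossC Z). Qed.

Lemma dcrossSl (X Y Z : {set U}) : X \subset Y -> dcross X Z <= dcross Y Z.
Proof. by move=> sXY; rewrite (dcross_splitl Z sXY) lerDl dcross_ge0. Qed.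

Lemma dcrossSr (X Y Z : {set U}) : X \subset Y -> dcross Z X <= dcross Z Y.
Proof. by move=> sXY; rewrite !(dcrossC Z) dcrossSl. Qed.

Lemma dcross0l (Y : {set U}) : dcross set0 Y = 0.
Proof. by rewrite /dcross big_set0. Qed.

Lemma dcross1l u (Y : {set U}) : dcross [set u] Y = \sum_(v in Y) d u v.
Proof. by rewrite /dcross big_set1. Qed.

Lemma dcross1r u (Y : {set U}) : dcross Y [set u] = \sum_(v in Y) d v u.
Proof. by apply: eq_bigr => v _; rewrite big_set1. Qed.

Lemma dcross11 u v : dcross [set u] [set v] = d u v.
Proof. by rewrite dcross1l big_set1. Qed.

Lemma dcrossU1l u (X Y : {set U}) :
  u \notin X -> dcross (u |: X) Y = dcross [set u] Y + dcross X Y.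
Proof. by move=> uX; rewrite /dcross big_setU1 // big_set1. Qed.

Lemma dcrossU1r u (X Y : {set U}) :
  u \notin X -> dcross Y (u |: X) = dcross Y [set u] + dcross Y X.
Proof. by move=> uX; rewrite !(dcrossC Y) dcrossU1l. Qed.

Lemma dcross_sum1l (X Y : {set U}) : \sum_(u in X) dcross [set u] Y = dcross X Y.
Proof. by apply: eq_bigr => u _; rewrite dcross1l. Qed.

Lemma dcross_sum1r (X Y : {set U}) : \sum_(u in X) dcross Y [set u] = dcross Y X.
Proof. by rewrite dcrossC -dcross_sum1l; apply: eq_bigr => u _; rewrite dcrossC. Qed.

Lemma dcross_selfU1 u (X : {set U}) :
  u \notin X -> dcross (u |: X) (u |: X) = dcross X X + 2 * dcross [set u] X.
Proof.
by move=> uX; rewrite dcrossU1l // !dcrossU1r // dcross11 d_id (dcrossC X); ring.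
Qed.

Lemma dcross_selfD1 u (X : {set U}) :
  u \in X -> dcross X X = dcross (X :\ u) (X :\ u) + 2 * dcross [set u] X.
Proof.
move=> uX; have uXu : u \notin X :\ u by rewrite setD11.
have -> : dcross [set u] X = dcross [set u] (X :\ u).
  by rewrite -{1}(setD1K uX) dcrossU1r // dcross11 d_id add0r.
by rewrite -dcross_selfU1 // setD1K.
Qed.

Lemma dcross_pair u v : u != v -> dcross [set u; v] [set u; v] = 2 * d u v.
Proof. by move=> uv; rewrite dcross_selfU1 ?inE // dcross11 d_id dcross11 add0r. Qed.

Lemma dcross_self_split (X Y : {set U}) : X \subset Y ->
  dcross Y Y = dcross X X + 2 * dcross (Y :\: X) X + dcross (Y :\: X) (Y :\: X).
Proof.
move=> sXY; rewrite (dcross_splitl Y sXY) !(dcross_splitr _ sXY) (dcrossC X (Y :\: X)).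
ring.
Qed.

Lemma dcross_swap o p (S : {set U}) : o \notin S -> p \in S ->
  dcross (o |: (S :\ p)) (o |: (S :\ p))
  = dcross S S + 2 * (dcross [set o] S - d o p - dcross [set p] S).
Proof.
move=> oS pS; have oSp : o \notin S :\ p by rewrite !inE negb_and oS orbT.
have -> : dcross [set o] S = d o p + dcross [set o] (S :\ p).
  by rewrite -{1}(setD1K pS) dcrossU1r ?setD11 // dcross11.
by rewrite dcross_selfU1 // (dcross_selfD1 pS); ring.
Qed.

Lemma dsumE (S : {set U}) : 2 * dsum d S = dcross S S.
Proof.
pose lt (u v : U) := (enum_rank u < enum_rank v)%N.
have split_d u v : d u v = (if lt u v then d u v else 0) + (if lt v u then d v u else 0).
  rewrite /lt; case: ltngtP => [_|_|/val_inj/enum_rank_inj ->].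
  - by rewrite addr0.
  - by rewrite add0r dC.
  - by rewrite d_id addr0.
have -> : dcross S S = \sum_(u in S) \sum_(v in S) (if lt u v then d u v else 0)
    + \sum_(u in S) \sum_(v in S) (if lt v u then d v u else 0).
  by rewrite -big_split; apply: eq_bigr => u _; rewrite -big_split; apply: eq_bigr.
rewrite [X in _ = _ + X]exchange_big.
by rewrite /dsum mulr_natl mulr2n; congr (_ + _); apply: eq_bigr => u _; rewrite big_mkcondr.
Qed.

Variable alpha : R.
Hypothesis alpha_ge0 : 0 <= alpha.
Hypothesis d_tri : forall u v w, d u v <= alpha * (d v w + d w u).

Lemma dcross_self_le (X : {set U}) t :
  dcross X X <= 2 * alpha * (#|X|%:R - 1) * dcross X [set t].
Proof.
have offdiag : dcross X X = \sum_(u in X) \sum_(v in X :\ u) d u v.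
  by apply: eq_bigr => u uX; rewrite (big_setD1 u uX) /= d_id add0r.
have sum_to_t u : u \in X -> \sum_(v in X :\ u) d v t = dcross X [set t] - d u t.
  by move=> uX; rewrite dcross1r (big_setD1 u uX) /=; ring.
have sum_from_t u : u \in X -> \sum_(v in X :\ u) d t u = (#|X|%:R - 1) * d t u.
  move=> uX; rewrite sumr_const [in RHS](cardsD1 u X) uX add1n -addn1 natrD addrK.
  by rewrite mulr_natl.
rewrite offdiag; apply: le_trans (_ : \sum_(u in X) \sum_(v in X :\ u)
  alpha * (d v t + d t u) <= _).
  by apply: ler_sum => u _; apply: ler_sum => v _; exact: d_tri.
rewrite (eq_bigr (fun u => alpha * ((dcross X [set t] - d u t) + (#|X|%:R - 1) * d t u)));
  last by move=> u uX; rewrite -mulr_sumr big_split /= sum_to_t // sum_from_t.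
rewrite -mulr_sumr big_split /= sumrB sumr_const -mulr_sumr -mulr_natl.
rewrite -(dcross1r t X) (eq_bigr (fun u => d u t)) -?dcross1r //.
by rewrite le_eqVlt; apply/orP; left; apply/eqP; ring.
Qed.

Lemma dcross_self_le_sum (X : {set U}) (g : U -> U) : #|X| != 2%N ->
  dcross X X <= 2 * alpha * \sum_(u in X) dcross (X :\ u) [set g u].
Proof.
move=> X_ne2; have rhs_ge0 : 0 <= 2 * alpha * \sum_(u in X) dcross (X :\ u) [set g u].
  by rewrite !mulr_ge0 // sumr_ge0 // => u _; apply: dcross_ge0.
have [X_le1 | X_gt2] := leqP #|X| 1.
  suff -> : dcross X X = 0 by [].
  have [/cards0_eq -> | X_gt0] := posnP #|X|; first by rewrite dcross0l.
  have /cards1P [u ->] : #|X| == 1%N by rewrite eqn_leq X_le1.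
  by rewrite dcross11 d_id.
have X_gt2' : (2 < #|X|)%N by rewrite ltn_neqAle eq_sym X_ne2.
have sum_sub : \sum_(u in X) dcross (X :\ u) (X :\ u) = (#|X|%:R - 2) * dcross X X.
  rewrite (eq_bigr (fun u => dcross X X - 2 * dcross [set u] X)); last first.
    by move=> u uX; rewrite (dcross_selfD1 uX) addrK.
  by rewrite sumrB sumr_const -mulr_sumr dcross_sum1l -mulr_natl; ring.
have sub_le u : u \in X ->
    dcross (X :\ u) (X :\ u) <= 2 * alpha * (#|X|%:R - 2) * dcross (X :\ u) [set g u].
  move=> uX; have -> : (#|X|%:R - 2 : R) = #|X :\ u|%:R - 1.
    by rewrite [in LHS](cardsD1 u X) uX add1n -addn1 natrD; ring.
  exact: dcross_self_le.
have card_gt0 : (0 : R) < #|X|%:R - 2 by rewrite subr_gt0 ltr_nat.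
rewrite -(ler_pM2l card_gt0) -sum_sub; apply: le_trans (ler_sum _ sub_le) _.
by rewrite mulrCA -mulr_sumr mulrA.
Qed.

Lemma dist_quad_le a b p q :
  2 * d a b <= (alpha + alpha ^+ 2) * (d b p + d a q) + alpha ^+ 2 * (2 * d p q).
Proof.
have abq : d a b <= alpha * (d b q + d q a) := d_tri a b q.
have bqp : alpha * d b q <= alpha * (alpha * (d q p + d p b)) by rewrite ler_wpM2l.
have abp : d a b <= alpha * (d b p + d p a) := d_tri a b p.
have apq : alpha * d a p <= alpha * (alpha * (d p q + d q a)) by rewrite ler_wpM2l // dC.
rewrite (dC q a) (dC p b) (dC q p) in abq bqp abp apq; rewrite (dC p a) in abp.
rewrite expr2; nra.
Qed.

End CrossSum.

Section Matroid.
Variables (U : finType) (F : pred {set U}).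
Hypothesis F_subset : forall A B : {set U}, F B -> A \subset B -> F A.
Hypothesis F_augment : forall A B : {set U}, F A -> F B -> (#|A| < #|B|)%N ->
  exists2 e, e \in B :\: A & F (e |: A).

Lemma indep_augment_card (I K : {set U}) : F I -> F K -> (#|I| <= #|K|)%N ->
  exists I' : {set U}, [/\ I \subset I', I' \subset I :|: K, F I' & #|I'| = #|K|].
Proof.
move=> FI FK; move: {2}(#|K| - #|I|)%N (erefl (#|K| - #|I|)%N) => n.
elim: n I FI => [|n IH] I FI gap IK.
  exists I; split => //; first exact: subsetUl.
  by apply/eqP; rewrite eqn_leq IK -subn_eq0 gap.
have IltK : (#|I| < #|K|)%N by rewrite -subn_gt0 gap.
have [e /setDP [eK eI] Fe] := F_augment FI FK IltK.
have cardeI : #|e |: I| = #|I|.+1 by rewrite cardsU1 eI.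
have [|| I' [eII' sI' FI' cI']] := IH (e |: I) Fe; rewrite ?cardeI //.
  by rewrite subnS gap.
exists I'; split => //; first by apply: subset_trans eII'; apply: subsetUr.
apply: subset_trans sI' _; rewrite subUset subsetUr andbT subUset subsetUl sub1set.
by rewrite inE eK orbT.
Qed.

Lemma indep_card_le_maximal (A J I : {set U}) :
  F A -> {in J :\: A, forall e, ~~ F (e |: A)} -> F I -> I \subset A :|: J ->
  (#|I| <= #|A|)%N.
Proof.
move=> FA Amax FI sI; rewrite leqNgt; apply/negP => AltI.
have [e /setDP [eI eA] Fe] := F_augment FA FI AltI.
have eJ : e \in J :\: A.
  by rewrite inE eA; move/subsetP/(_ e eI): sI; rewrite inE (negbTE eA).
by move: (Amax e eJ); rewrite Fe.
Qed.

Lemma basis_exchange_subset (S J : {set U}) a :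
  is_basis F S -> a \notin S -> J \subset S -> F (a |: J) ->
  exists2 b, b \in S :\: J & F (a |: (S :\ b)).
Proof.
move=> [FS Smax] aS JS FaJ.
have aJ : a \notin J by apply: contra aS; apply: (subsetP JS).
have JltS : (#|J| < #|S|)%N.
  rewrite ltn_neqAle subset_leq_card // andbT; apply: contraNneq aS => cJ.
  have JeS : J = S by apply/eqP; rewrite eqEcard JS cJ leqnn.
  by rewrite JeS in FaJ; rewrite (Smax _ FaJ (subsetUr _ _)) setU11.
have [|I [aJI IaJS FI cI]] := indep_augment_card FaJ FS; first by rewrite cardsU1 aJ.
have aI : a \in I by apply: (subsetP aJI); rewrite setU11.
have IaS : I \subset a |: S.
  apply: subset_trans IaJS _; rewrite subUset subsetUr andbT.
  by apply: setUS.
have /subsetPn [b bS bI] : ~~ (S \subset I).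
  apply/negP => SI; have : (#|a |: S| <= #|I|)%N.
    by apply: subset_leq_card; rewrite subUset sub1set aI SI.
  by rewrite cardsU1 aS cI add1n ltnn.
have JI : J \subset I := subset_trans (subsetUr _ _) aJI.
exists b; first by rewrite inE bS andbT; apply: contra bI; apply: (subsetP JI).
suff <- : I = a |: (S :\ b) by [].
apply/eqP; rewrite eqEcard; apply/andP; split.
  apply/subsetP => u uI; have := subsetP IaS u uI; rewrite !inE.
  by case: eqP => //= _ ->; rewrite andbT; apply: (contraNneq _ bI) => <-.
by rewrite cardsU1 !inE negb_and aS orbT cI (cardsD1 b S) bS.
Qed.

Lemma basis_sym_exchange (O S : {set U}) a : F O -> is_basis F S -> a \in O :\: S ->
  exists2 b, b \in S :\: O & F (b |: (O :\ a)) /\ F (a |: (S :\ b)).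
Proof.
move=> FO basisS /setDP [aO aS].
set Y := [set b in S :\: O | F (b |: (O :\ a))]; set J := S :\: Y.
have JS : J \subset S := subsetDl S Y.
have FOa : F (O :\ a) := F_subset FO (subD1set O a).
have Oa_max : {in J :\: (O :\ a), forall e, ~~ F (e |: (O :\ a))}.
  move=> e /setDP [/setDP [eS eY] eOa]; apply: contra eY => Fe.
  rewrite inE Fe andbT inE eS andbT; apply: contra eOa => eO.
  by rewrite inE eO andbT inE; apply: (contraNneq _ aS) => <-.
have FaJ : F (a |: J).
  have FJ : F J := F_subset (proj1 basisS) JS.
  have JleO : (#|J| <= #|O|)%N.
    apply: leq_trans (indep_card_le_maximal FOa Oa_max FJ (subsetUr _ _)) _.
    exact: subset_leq_card (subD1set O a).
  have [I [JI IJO FI cI]] := indep_augment_card FJ FO JleO.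
  suff aI : a \in I by apply: (@F_subset _ I FI); rewrite subUset sub1set aI JI.
  apply: contraT => aI; suff : (#|I| <= #|O :\ a|)%N by rewrite cI (cardsD1 a O) aO ltnn.
  apply: indep_card_le_maximal FOa Oa_max FI _.
  apply/subsetP => u uI; rewrite inE; case/setUP: (subsetP IJO u uI) => [-> | uO].
    by rewrite orbT.
  by rewrite in_setD1 uO andbT (contraNneq _ aI) // => <-.
have [b /setDP [bS bJ] Fab] := basis_exchange_subset basisS aS JS FaJ.
move: bJ; rewrite inE bS andbT negbK inE => /andP [bSO Fb].
by exists b.
Qed.

Lemma basis_exchange_inj (S O : {set U}) : is_basis F S -> F O ->
  exists pi : U -> U, [/\ {in O :\: S, forall o, pi o \in S :\: O},
     {in O :\: S &, injective pi} & {in O :\: S, forall o, F (o |: (S :\ pi o))}].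
Proof.
move=> basisS; move: {2}#|O :\: S| (erefl #|O :\: S|) => n.
elim: n O => [|n IH] O cO FO.
  by exists id; split => o; rewrite (cards0_eq cO) inE.
have [a aOS] : exists a, a \in O :\: S by apply/set0Pn; rewrite -card_gt0 cO.
have [b /setDP [bS bO] [Fb Fa]] := basis_sym_exchange FO basisS aOS.
move: (aOS) => /setDP [aO aS].
have O'S : (b |: (O :\ a)) :\: S = (O :\: S) :\ a.
  apply/setP => u; rewrite !inE; have [-> | _] := eqVneq u b; last by rewrite andbCA.
  by rewrite bS (negbTE bO) !andbF.
have [|pi' [pi'_S pi'_inj pi'_F]] := IH _ _ Fb.
  by move: cO; rewrite O'S (cardsD1 a) aOS add1n => -[].
have pi'_val u : u \in O :\: S -> u != a -> [/\ pi' u \in S, pi' u \notin O & pi' u != b].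
  move=> uOS ua; have /pi'_S : u \in (b |: (O :\ a)) :\: S by rewrite O'S in_setD1 ua.
  rewrite !inE negb_or => /andP [/andP [pb pOa] pS]; split => //.
  by apply: contra pOa => pO; rewrite pO andbT; apply: (contraNneq _ aS) => <-.
exists (fun u => if u == a then b else pi' u); split.
- move=> u uOS; case: eqP => [_ | /eqP ua]; first by rewrite inE bS bO.
  by have [pS pO _] := pi'_val u uOS ua; rewrite inE pS pO.
- move=> u v uOS vOS /=.
  case: (eqVneq u a) => [-> | ua]; case: (eqVneq v a) => [-> | va] //.
  + by move=> vb; have [_ _] := pi'_val v vOS va; rewrite -vb eqxx.
  + by move=> ub; have [_ _] := pi'_val u uOS ua; rewrite ub eqxx.
  + by apply: pi'_inj; rewrite O'S in_setD1 ?ua ?va ?uOS ?vOS.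
- move=> u uOS; case: eqP => [-> // | /eqP ua].
  by apply: pi'_F; rewrite O'S in_setD1 ua.
Qed.

End Matroid.

Section Submodular.
Variables (U : finType) (R : realFieldType) (f : {set U} -> R).
Hypothesis f_submod : submodular f.

Lemma submod_sum_setU (S B : {set U}) : [disjoint B & S] ->
  f (B :|: S) - f S <= \sum_(o in B) (f (o |: S) - f S).
Proof.
move: {2}#|B| (erefl #|B|) => n; elim: n B => [|n IH] B cB BS.
  by rewrite (cards0_eq cB) set0U big_set0 subrr.
have [o oB] : exists o, o \in B by apply/set0Pn; rewrite -card_gt0 cB.
have oBS : o \notin (B :\ o) :|: S by rewrite in_setU setD11 (disjointFr BS oB).
have cBo : #|B :\ o| = n by move: cB; rewrite (cardsD1 o) oB add1n => -[].
have := IH (B :\ o) cBo (disjointWl (subD1set B o) BS).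
have := f_submod (subsetUr (B :\ o) S) oBS.
rewrite (big_setD1 o oB) /= -[in B :|: S](setD1K oB) -setUA; lra.
Qed.

Lemma submod_sum_setD (S A : {set U}) : A \subset S ->
  \sum_(a in A) (f S - f (S :\ a)) <= f S - f (S :\: A).
Proof.
move: {2}#|A| (erefl #|A|) => n; elim: n A => [|n IH] A cA AS.
  by rewrite (cards0_eq cA) big_set0 setD0 subrr.
have [a aA] : exists a, a \in A by apply/set0Pn; rewrite -card_gt0 cA.
have aS : a \in S := subsetP AS a aA.
have cAa : #|A :\ a| = n by move: cA; rewrite (cardsD1 a) aA add1n => -[].
have := IH (A :\ a) cAa (subset_trans (subD1set A a) AS).
have := f_submod (setDS S (_ : [set a] \subset A)) (_ : a \notin S :\ a).
rewrite sub1set setD11 => /(_ aA isT).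
have -> : a |: (S :\ a) = S by rewrite setD1K.
have -> : a |: (S :\: A) = S :\: (A :\ a).
  apply/setP => u; rewrite !inE; have [-> | //] := eqVneq u a.
  by rewrite aS.
rewrite (big_setD1 a aA) /=; lra.
Qed.

Lemma submod_swap_sum (S B : {set U}) (g : U -> U) :
  [disjoint B & S] -> {in B &, injective g} -> {in B, forall o, g o \in S} ->
  (f (B :|: S) - f S) - (f S - f (S :\: g @: B))
  <= \sum_(o in B) (f (o |: (S :\ g o)) - f S).
Proof.
move=> BS g_inj gS.
have swap_gain o : o \in B ->
    (f (o |: S) - f S) - (f S - f (S :\ g o)) <= f (o |: (S :\ g o)) - f S.
  move=> oB; have := f_submod (subD1set S (g o)) (negbT (disjointFr BS oB)); lra.
apply: le_trans (ler_sum _ swap_gain); rewrite sumrB lerB ?submod_sum_setU //.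
rewrite -(big_imset (fun a => f S - f (S :\ a)) g_inj) /=; apply: submod_sum_setD.
by apply/subsetP => _ /imsetP [o oB ->]; apply: gS.
Qed.

End Submodular.

Lemma ls_run_inv (U : finType) (R : realFieldType) (F : pred {set U})
    (Phi : {set U} -> R) (S0 S : {set U}) :
  ls_run F Phi S0 S -> F S0 -> [/\ F S, #|S| = #|S0| & Phi S0 <= Phi S].
Proof.
elim=> [T FT | T T' V [u [v [uT vT -> FT' lt]]] _ IH _]; first by split.
have [FV cV le] := IH FT'; split => //; last exact: le_trans (ltW lt) le.
by rewrite cV cardsU1 in_setD1 negb_and uT orbT (cardsD1 v T) vT.
Qed.

Lemma basis_of_card (U : finType) (F : pred {set U}) (S0 S : {set U}) :
  (forall A B : {set U}, F A -> F B -> (#|A| < #|B|)%N ->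
     exists2 e, e \in B :\: A & F (e |: A)) ->
  is_basis F S0 -> F S -> #|S| = #|S0| -> is_basis F S.
Proof.
move=> F_augment [FS0 S0max] FS cS; split => // T FT ST.
apply/eqP; rewrite eqEcard ST leqNgt; apply/negP; rewrite cS => S0ltT.
have [e /setDP [_ eS0] Fe] := F_augment _ _ FS0 FT S0ltT.
by move: eS0; rewrite (S0max _ Fe (subsetUr _ _)) setU11.
Qed.

Section Objective.
Variables (U : finType) (R : realFieldType) (f : {set U} -> R) (lam : R) (d : U -> U -> R).
Hypothesis dC : forall u v, d u v = d v u.
Hypothesis d_id : forall u, d u u = 0.

Lemma phi2E (X : {set U}) : 2 * phi f lam d X = 2 * f X + lam * dcross d X X.
Proof. by rewrite /phi -dsumE //; ring. Qed.

Lemma phi_pair u v : u != v -> phi f lam d [set u; v] = f [set u; v] + lam * d u v.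
Proof.
move=> uv; apply: (mulfI (_ : 2 != 0)); first by rewrite pnatr_eq0.
by rewrite phi2E dcross_pair //; ring.
Qed.

Lemma phi_subset_le (X Y : {set U}) : 0 <= lam -> (forall u v, 0 <= d u v) -> monotone f ->
  X \subset Y -> phi f lam d X <= phi f lam d Y.
Proof.
move=> lam_ge0 d_ge0 f_mono XY; rewrite -(ler_pM2l (_ : 0 < 2)) // !phi2E.
have dXY : dcross d X X <= dcross d Y Y.
  by apply: le_trans (dcrossSl d_ge0 _ XY) _; apply: dcrossSr.
by rewrite lerD ?ler_wpM2l ?f_mono.
Qed.

End Objective.

(* The variables stand for the cross sums of the final estimate: [bc] for
   d(B, C), [aa] for d(A, A), [aq] for d(A, Q), and so on, with A = pi(B),
   C = O /\ S and Q = S \ A. *)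
Lemma approx_arith (R : realFieldType) (a l fO fS bc off aa aq qq cc bb : R) :
  1 <= a -> 0 <= l -> 0 <= fO -> 0 <= fS -> 0 <= bc -> 0 <= aa -> 0 <= aq -> 0 <= qq ->
  l * (bc + off) <= 2 * fS - fO + l * (aa + aq) -> cc <= qq -> bb <= 2 * a * off ->
  2 * fO + l * (cc + 2 * bc + bb) <= 2 * a ^+ 2 * (2 * fS + l * (aa + 2 * aq + qq)).
Proof.
move=> a_ge1 l_ge0 fO_ge0 fS_ge0 bc_ge0 aa_ge0 aq_ge0 qq_ge0 key cc_le bb_le.
have a_ge0 : 0 <= a := le_trans ler01 a_ge1.
have lbb : l * bb <= l * (2 * a * off) by rewrite ler_wpM2l.
have lcc : l * cc <= l * qq by rewrite ler_wpM2l.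
have akey : a * (l * (bc + off)) <= a * (2 * fS - fO + l * (aa + aq)) by rewrite ler_wpM2l.
have lbc : 0 <= (a - 1) * (l * bc) by rewrite mulr_ge0 ?subr_ge0 ?mulr_ge0.
have fO_le : 0 <= (a - 1) * fO by rewrite mulr_ge0 ?subr_ge0.
have fS_le : 0 <= a * (a - 1) * fS by rewrite !mulr_ge0 ?subr_ge0.
have aa_le : 0 <= a * (a - 1) * (l * aa) by rewrite !mulr_ge0 ?subr_ge0.
have aq_le : 0 <= a * (2 * a - 1) * (l * aq) by rewrite !mulr_ge0 ?subr_ge0 //; lra.
have qq_le : 0 <= (2 * a * a - 1) * (l * qq) by rewrite !mulr_ge0 ?subr_ge0 //; nra.
rewrite expr2; lra.
Qed.

Lemma approx_arith_pair (R : realFieldType) (a l fO fS bc off aa aq qq cc bb : R) :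
  1 <= a -> 0 <= l -> 0 <= fO -> 0 <= fS -> 0 <= bc -> 0 <= aq -> 0 <= qq ->
  l * (bc + off) <= 2 * fS - fO + l * (aa + aq) -> cc <= qq ->
  bb <= (a + a ^+ 2) * off + a ^+ 2 * aa -> aa <= 2 * a * aq ->
  2 * fO + l * (cc + 2 * bc + bb) <= 2 * a ^+ 2 * (2 * fS + l * (aa + 2 * aq + qq)).
Proof.
move=> a_ge1 l_ge0 fO_ge0 fS_ge0 bc_ge0 aq_ge0 qq_ge0 key cc_le bb_le aa_le.
rewrite expr2 in bb_le *.
have a_ge0 : 0 <= a := le_trans ler01 a_ge1.
have aa1 : 1 <= a * a by nra.
have lbb : l * bb <= l * ((a + a * a) * off + a * a * aa) by rewrite ler_wpM2l.
have lcc : l * cc <= l * qq by rewrite ler_wpM2l.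
have akey : (a + a * a) * (l * (bc + off)) <= (a + a * a) * (2 * fS - fO + l * (aa + aq)).
  by rewrite ler_wpM2l // addr_ge0 ?mulr_ge0.
have laa : a * (l * aa) <= a * (l * (2 * a * aq)) by rewrite !ler_wpM2l.
have lbc : 0 <= (a + a * a - 2) * (l * bc) by rewrite mulr_ge0 ?subr_ge0 ?mulr_ge0 //; lra.
have fO_le : 0 <= (a + a * a - 2) * fO by rewrite mulr_ge0 ?subr_ge0 //; lra.
have fS_le : 0 <= (a * a - a) * fS by rewrite mulr_ge0 ?subr_ge0 //; nra.
have aq_le : 0 <= (a * a - a) * (l * aq) by rewrite mulr_ge0 ?subr_ge0 ?mulr_ge0 //; nra.
have qq_le : 0 <= (2 * a * a - 1) * (l * qq) by rewrite !mulr_ge0 ?subr_ge0 //; nra.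
lra.
Qed.

Section LocalOptimum.
Variables (U : finType) (R : realFieldType) (F : pred {set U}).
Variables (alpha lam : R) (d : U -> U -> R) (f : {set U} -> R).
Hypotheses (alpha_ge1 : 1 <= alpha) (lam_ge0 : 0 <= lam).
Hypotheses (d_ge0 : forall u v, 0 <= d u v) (dC : forall u v, d u v = d v u).
Hypotheses (d_id : forall u, d u u = 0).
Hypothesis d_tri : forall u v w, d u v <= alpha * (d v w + d w u).
Hypotheses (f_ge0 : forall A, 0 <= f A) (f_mono : monotone f) (f_submod : submodular f).

Variables (S O : {set U}) (pi : U -> U).
Hypothesis S_opt : local_opt F (phi f lam d) S.
Hypothesis FO : F O.
Hypothesis pair_le :
  forall u v, u != v -> F [set u; v] -> phi f lam d [set u; v] <= phi f lam d S.
Hypothesis pi_out : {in O :\: S, forall o, pi o \in S :\: O}.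
Hypothesis pi_inj : {in O :\: S &, injective pi}.
Hypothesis pi_swap : {in O :\: S, forall o, F (o |: (S :\ pi o))}.

Local Notation P := (dcross d).
Local Notation B := (O :\: S).
Local Notation A := (pi @: (O :\: S)).
Local Notation C := (O :&: S).
Local Notation Q := (S :\: pi @: (O :\: S)).
Local Notation matched := (\sum_(o in O :\: S) d o (pi o)).
Local Notation crossed := (\sum_(o in O :\: S) P ((O :\: S) :\ o) [set pi o]).

Lemma A_sub_SC : A \subset S :\: C.
Proof.
apply/subsetP => _ /imsetP [o oB ->]; have /setDP [pS pO] := pi_out oB.
by rewrite !inE pS negb_and pO.
Qed.

Lemma A_sub_S : A \subset S.
Proof. exact: subset_trans A_sub_SC (subsetDl S C). Qed.

Lemma C_sub_Q : C \subset Q.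
Proof.
apply/subsetP => u uC; rewrite inE (subsetP (subsetIr O S) u uC) andbT.
by apply: contraL uC => /(subsetP A_sub_SC); rewrite inE => /andP [].
Qed.

Lemma swap_no_gain o : o \in B ->
  f (o |: (S :\ pi o)) - f S + lam * (P [set o] S - d o (pi o) - P [set pi o] S) <= 0.
Proof.
move=> oB; have /setDP [oO oS] := oB; have /setDP [pS _] := pi_out oB.
have : phi f lam d (o |: (S :\ pi o)) <= phi f lam d S.
  rewrite leNgt; apply/negP => gain; apply: (S_opt (T := o |: (S :\ pi o))).
  by exists o, (pi o); split => //; apply: pi_swap.
rewrite -(ler_pM2l (_ : 0 < 2)) // !phi2E // dcross_swap //; lra.
Qed.

Lemma swap_sum_bound : f O - 2 * f S + lam * (P B S - matched - P A S) <= 0.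
Proof.
have f_part : f O - 2 * f S <= \sum_(o in B) (f (o |: (S :\ pi o)) - f S).
  apply: le_trans (submod_swap_sum f_submod _ pi_inj _); last 2 first.
  - by have /subsetDP [] := subxx B.
  - by move=> o /pi_out /setDP [].
  have O_sub : O \subset B :|: S.
    by apply/subsetP => u uO; rewrite !inE uO andbT orNb.
  have := f_mono O_sub; have := f_ge0 (S :\: A); lra.
have d_part : \sum_(o in B) (P [set o] S - d o (pi o) - P [set pi o] S)
    = P B S - matched - P A S.
  by rewrite !sumrB dcross_sum1l -(big_imset (fun p => P [set p] S) pi_inj) dcross_sum1l.
have : \sum_(o in B) (f (o |: (S :\ pi o)) - f S
    + lam * (P [set o] S - d o (pi o) - P [set pi o] S)) <= 0.
  by apply: sumr_le0 => o; apply: swap_no_gain.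
rewrite big_split -mulr_sumr d_part /=; lra.
Qed.

Lemma dcrossBS_ge : P B C + matched + crossed <= P B S.
Proof.
rewrite (dcross_splitr dC _ (subsetIr O S)) -addrA lerD2l.
apply: le_trans (dcrossSr d_ge0 dC _ A_sub_SC).
rewrite -[P B A](dcross_sum1r dC) big_imset //= -big_split /=; apply: ler_sum => o oB.
by rewrite (dcross_splitl d [set pi o] (_ : [set o] \subset B)) ?sub1set // dcross11.
Qed.

Lemma key_bound : lam * (P B C + crossed) <= 2 * f S - f O + lam * (P A A + P A Q).
Proof.
have := swap_sum_bound; rewrite (dcross_splitr dC A A_sub_S).
have := ler_wpM2l lam_ge0 dcrossBS_ge; lra.
Qed.

Lemma phiO2E : 2 * phi f lam d O = 2 * f O + lam * (P C C + 2 * P B C + P B B).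
Proof.
have -> : B = O :\: C by rewrite setDIr setDv set0U.
by rewrite phi2E // (dcross_self_split dC (subsetIl O S)).
Qed.

Lemma phiS2E : 2 * phi f lam d S = 2 * f S + lam * (P A A + 2 * P A Q + P Q Q).
Proof. by rewrite phi2E // (dcross_self_split dC A_sub_S) (dcrossC dC Q). Qed.

Lemma dcrossBB_le : #|B| != 2%N -> P B B <= 2 * alpha * crossed.
Proof. exact: (dcross_self_le_sum d_ge0 dC d_id (le_trans ler01 alpha_ge1) d_tri pi). Qed.

Section TwoOutside.
Variables o1 o2 : U.
Hypotheses (o12 : o1 != o2) (B2 : B = [set o1; o2]).

Lemma pi_pair_neq : pi o1 != pi o2.
Proof.
apply: contra o12 => /eqP /pi_inj -> //; by rewrite B2 !inE eqxx ?orbT.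
Qed.

Lemma A_pair : A = [set pi o1; pi o2].
Proof. by rewrite B2 imsetU1 imset_set1. Qed.

Lemma dcrossBB_le_pair : P B B <= (alpha + alpha ^+ 2) * crossed + alpha ^+ 2 * P A A.
Proof.
have crossedE : crossed = d o2 (pi o1) + d o1 (pi o2).
  rewrite B2 big_setU1 ?inE //= big_set1 setU1K ?inE // dcross11.
  have -> : [set o1; o2] :\ o2 = [set o1].
    apply/setP => u; rewrite !inE; case: (eqVneq u o2) => [-> | _] /=; last by rewrite orbF.
    by rewrite eq_sym (negbTE o12).
  by rewrite dcross11.
rewrite crossedE A_pair B2 !dcross_pair ?pi_pair_neq //.
exact: (dist_quad_le dC (le_trans ler01 alpha_ge1) d_tri).
Qed.

Lemma dcrossAA_le t : t \in Q -> P A A <= 2 * alpha * P A Q.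
Proof.
move=> tQ; have cardA : #|A| = 2%N by rewrite A_pair cards2 pi_pair_neq.
have alpha_ge0 : 0 <= alpha := le_trans ler01 alpha_ge1.
apply: le_trans (dcross_self_le dC d_id d_tri A t) _.
have -> : (#|A|%:R - 1 : R) = 1 by rewrite cardA; lra.
by rewrite mulr1 ler_wpM2l ?mulr_ge0 // dcrossSr // sub1set.
Qed.

Lemma phiO_le_pair : Q = set0 -> phi f lam d O <= phi f lam d S.
Proof.
move=> Q0; have C0 : C = set0 by apply/eqP; rewrite -subset0 -Q0 C_sub_Q.
have OB : O = [set o1; o2].
  by rewrite -B2; apply/esym/setDidPl; rewrite -setI_eq0 C0.
by rewrite OB; apply: pair_le => //; rewrite -OB.
Qed.

End TwoOutside.

Lemma local_opt_approx : phi f lam d O / (2 * alpha ^+ 2) <= phi f lam d S.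
Proof.
have alpha_sq_ge1 : 1 <= alpha ^+ 2 by rewrite expr_ge1 // (le_trans ler01).
have phiS_ge0 : 0 <= phi f lam d S.
  by rewrite addr_ge0 // mulr_ge0 // -(ler_pM2l (_ : 0 < 2)) // mulr0 dsumE // dcross_ge0.
rewrite ler_pdivrMr ?mulr_gt0 ?exprn_gt0 ?(lt_le_trans ltr01 alpha_ge1) //.
suff : 2 * phi f lam d O <= 2 * alpha ^+ 2 * (2 * phi f lam d S) by lra.
have P_ge0 := dcross_ge0 d_ge0.
have key := key_bound; have cc_le : P C C <= P Q Q.
  by apply: le_trans (dcrossSl d_ge0 _ C_sub_Q) (dcrossSr d_ge0 dC _ C_sub_Q).
rewrite phiO2E phiS2E.
have [/eqP/cards2P [o1 [o2 [o12 B2]]] | B_ne2] := eqVneq #|B| 2%N.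
  have [Q0 | /set0Pn [t tQ]] := eqVneq Q set0.
    rewrite -phiO2E -phiS2E; have := phiO_le_pair o12 B2 Q0; nra.
  by apply: (approx_arith_pair _ _ _ _ _ _ _ key cc_le
    (dcrossBB_le_pair o12 B2) (dcrossAA_le o12 B2 tQ)).
by apply: (approx_arith _ _ _ _ _ _ _ _ key cc_le (dcrossBB_le B_ne2)).
Qed.

End LocalOptimum.

Unset Implicit Arguments.

Theorem theorem2 (U : finType) (R : realFieldType) (F : pred {set U})
  (alpha lam : R) (d : U -> U -> R) (f : {set U} -> R) (x y : U)
  (S0 S O : {set U}) :
  is_matroid F -> (2 <= mrank F)%N ->
  0 <= lam -> 1 <= alpha -> relaxed_semimetric alpha d ->
  (forall A, 0 <= f A) -> monotone f -> submodular f ->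
  x != y -> F [set x; y] ->
  (forall x' y' : U, x' != y' -> F [set x'; y'] ->
     f [set x'; y'] + lam * d x' y' <= f [set x; y] + lam * d x y) ->
  is_basis F S0 -> x \in S0 -> y \in S0 ->
  ls_run F (phi f lam d) S0 S -> local_opt F (phi f lam d) S ->
  F O -> (forall T, F T -> phi f lam d T <= phi f lam d O) ->
  phi f lam d O / (2 * alpha ^+ 2) <= phi f lam d S.
Proof.
move=> [_ F_subset F_augment] _ lam_ge0 alpha_ge1 [d_ge0 dC d_id d_tri] f_ge0 f_mono
  f_submod xy _ best_pair basisS0 xS0 yS0 run S_opt FO _.
have [FS cardS phiS0_le] := ls_run_inv run (proj1 basisS0).
have basisS := basis_of_card F_augment basisS0 FS cardS.
have [pi [pi_out pi_inj pi_swap]] := basis_exchange_inj F_subset F_augment basisS FO.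
apply: (local_opt_approx alpha_ge1 lam_ge0 d_ge0 dC d_id d_tri f_ge0 f_mono f_submod
  S_opt FO _ pi_out pi_inj pi_swap).
move=> u v uv Fuv; apply: le_trans phiS0_le.
rewrite phi_pair //; apply: le_trans (best_pair u v uv Fuv) _.
rewrite -phi_pair //; apply: phi_subset_le => //.
by rewrite subUset !sub1set xS0 yS0.
Qed.
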